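(* Let $I\in\mathcal S$ be written as $I=I(y)=\sum_k a_k(c)y^k$ with $a_k\in\mathbb C[c]$. Then for every $n\ge0$, $$\langle I,e_n\rangle=I(u_n)\,e_n(c),\qquad u_n=c-\frac{n(n+1)}2,$$ where $I(u_n)=\sum_ka_k(c)u_n^k$ and $e_n(c)$ is $e_n(y)$ with $y$ replaced by $c$.
   Context: Chord diagrams and $w_{\mathfrak{sl}_2}(D)=\sum_\varphi x_{\varphi(p_1)}\cdots x_{\varphi(p_{2n})}\in\mathbb C[c]$ ($x_1,x_2,x_3$ the basis $\tfrac12\begin{pmatrix}0&1\\1&0\end{pmatrix},\tfrac12\begin{pmatrix}0&-i\\ i&0\end{pmatrix},\tfrac12\begin{pmatrix}1&0\\0&-1\end{pmatrix}$ of $\mathfrak{sl}_2$, $c=\sum x_i^2$, endpoints read in order from a cut point, $\varphi$ over maps chords$\to\{1,2,3\}$). A share: two oriented intervals (strand 1, strand 2) with finitely many chords, up to orientation-preserving diffeomorphisms of each strand. Join $(I,H)$: chord diagram whose circle reads strand 1 of $I$, strand 1 of $H$, strand 2 of $I$, strand 2 of $H$. $\mathcal S$: quotient of the $\mathbb C$-span of shares by $I\sim I'$ iff $w_{\mathfrak{sl}_2}((I,H))=w_{\mathfrak{sl}_2}((I',H))$ for all shares $H$. Cross product $I\times H$: strand 1 = strand 1 of $I$ then strand 1 of $H$; strand 2 = strand 2 of $H$ then strand 2 of $I$; it gives $\mathcal S\cong\mathbb C[c][y]$ ($c$ = class of a one-arch share, $y$ = class of the one-bridge share). $\langle I,H\rangle=w_{\mathfrak{sl}_2}((I,H))$.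 $U$: operator on $\mathcal S$ adding an arch on strand 1 whose endpoints precede and follow all other endpoints on strand 1. $e_n\in\mathcal S$: the unique monic degree-$n$ polynomial in $y$ over $\mathbb C[c]$ with $Ue_n=u_ne_n$. *)

From mathcomp Require Import all_boot all_order all_algebra.
Set Implicit Arguments.
Unset Strict Implicit.
Unset Printing Implicit Defensive.
Import GRing.Theory Num.Theory.
Local Open Scope ring_scope.

(* The ground field C is an arbitrary numClosedFieldType
   (an algebraically closed field of characteristic 0 with 'i); this covers
   the complex numbers. *)

Section SL2Shares.
Variable C : numClosedFieldType.

(* Elements of the tensor (free) algebra on x_1,x_2,x_3 (indexed by 'I_3:
   index 0,1,2 stand for x_1,x_2,x_3) as formal finite sums of words. *)
Definition FA := seq (C * seq 'I_3).

Definition fa_coef (F : FA) (w : seq 'I_3) : C := \sum_(t <- F | t.2 == w) t.1.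
Definition fa_scale (k : C) (F : FA) : FA := [seq (k * t.1, t.2) | t <- F].
Definition fa_mul (F G : FA) : FA := [seq (a.1 * b.1, a.2 ++ b.2) | a <- F, b <- G].
Definition fa_one : FA := [:: (1, [::])].

(* Levi-Civita symbol: [x_a, x_b] = i * sum_d eps a b d x_d for the basis
   x_j = sigma_j / 2 (Pauli matrices). *)
Definition eps (a b d : 'I_3) : C :=
  let t := (nat_of_ord a, nat_of_ord b, nat_of_ord d) in
  if t \in [:: (0, 1, 2); (1, 2, 0); (2, 0, 1)]%N then 1
  else if t \in [:: (0, 2, 1); (2, 1, 0); (1, 0, 2)]%N then -1 else 0.

Definition lie_rel (a b : 'I_3) : FA :=
  [:: (1, [:: a; b]); (-1, [:: b; a])] ++
  [seq (- ('i * eps a b d), [:: d]) | d <- enum 'I_3].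

Definition ideal_gen (k : C) (u : seq 'I_3) (a b : 'I_3) (v : seq 'I_3) : FA :=
  fa_scale k (fa_mul [:: (1, u)] (fa_mul (lie_rel a b) [:: (1, v)])).

Definition in_ideal (F : FA) : Prop :=
  exists R : seq (C * seq 'I_3 * 'I_3 * 'I_3 * seq 'I_3),
    forall w, fa_coef F w =
      fa_coef (flatten [seq (let: (k, u, a, b, v) := r in ideal_gen k u a b v)
                         | r <- R]) w.

Definition eqU (F G : FA) : Prop := in_ideal (F ++ fa_scale (-1) G).

Definition casimir : FA := [seq (1, [:: a; a]) | a <- enum 'I_3].
Definition fa_poly (p : {poly C}) : FA :=
  flatten [seq fa_scale p`_j (iter j (fa_mul casimir) fa_one) | j <- iota 0 (size p)].

(* A chord diagram cut at a point is a word of chord labels (each chord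
   label occurring twice); w_sl2 = sum over maps phi : chords -> {1,2,3}
   of x_{phi(p_1)} ... x_{phi(p_2n)}. *)
Definition wt_word (s : seq nat) : FA :=
  let L := undup s in
  [seq (1, [seq nth ord0 f (index t L) | t <- s]) | f : (size L).-tuple 'I_3].

(* a share: (word read along strand 1, word read along strand 2), letters
   are chord labels; well-formed if each chord has exactly two endpoints *)
Definition share := (seq nat * seq nat)%type.
Definition wf_share (I : share) : bool :=
  all (fun t => count_mem t (I.1 ++ I.2) == 2%N) (I.1 ++ I.2).

(* disjoint relabellings *)
Definition tagL (n : nat) : nat := n.*2.
Definition tagR (n : nat) : nat := n.*2.+1.

(* the join (I,H): circle reads I.1, H.1, I.2, H.2 *)
Definition joinw (I H : share) : seq nat :=
  map tagL I.1 ++ map tagR H.1 ++ map tagL I.2 ++ map tagR H.2.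

Definition cross (I H : share) : share :=
  (map tagL I.1 ++ map tagR H.1, map tagR H.2 ++ map tagL I.2).

(* U: arch on strand 1 enclosing all other endpoints of strand 1 *)
Definition Ushare (I : share) : share :=
  (0%N :: map tagR I.1 ++ [:: 0%N], map tagR I.2).

Definition arch : share := ([:: 0; 0]%N, [::]).
Definition bridge : share := ([:: 0]%N, [:: 0]%N).
Definition empty_share : share := ([::], [::]).

Definition Comb := seq (C * share).

Definition crossC (F G : Comb) : Comb :=
  [seq (a.1 * b.1, cross a.2 b.2) | a <- F, b <- G].
Definition Uop (F : Comb) : Comb := [seq (a.1, Ushare a.2) | a <- F].
Definition powS (s : share) (k : nat) : Comb :=
  iter k (fun F => crossC F [:: (1, s)]) [:: (1, empty_share)].

Definition pair_w (F G : Comb) : FA :=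
  flatten [seq fa_scale (a.1 * b.1) (wt_word (joinw a.2 b.2)) | a <- F, b <- G].

(* equality in S: same pairing with every share H *)
Definition equivS (F G : Comb) : Prop :=
  forall H : share, wf_share H ->
    eqU (pair_w F [:: (1, H)]) (pair_w G [:: (1, H)]).

(* the element A(y) = sum_k a_k(c) y^k of S (c = class of arch,
   y = class of bridge, product = cross product) *)
Definition repS (A : {poly {poly C}}) : Comb :=
  flatten [seq flatten [seq [seq (A`_k`_j * t.1, t.2)
                              | t <- crossC (powS arch j) (powS bridge k)]
                        | j <- iota 0 (size A`_k)]
          | k <- iota 0 (size A)].

Definition u_ev (n : nat) : {poly C} := 'X - ((n * n.+1)%:R / 2)%:P.

Definition is_e (n : nat) (E : {poly {poly C}}) : Prop :=
  [/\ E \is monic, size E = n.+1 &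
      equivS (Uop (repS E)) (repS ((u_ev n)%:P * E))].
End SL2Shares.

From mathcomp Require Import all_boot all_order all_algebra zify.
Set Implicit Arguments.
Unset Strict Implicit.
Unset Printing Implicit Defensive.
Import GRing.Theory Num.Theory.
Local Open Scope ring_scope.

(* Moving the first letter of a word to its end produces commutator
   terms which cancel after summing over all colourings, by antisymmetry of the
   structure constants; so w_sl2 of a chord diagram does not depend on the cut
   point, and an isolated chord contributes a factor c.  Hence <c^j y^k, E> =
   <E, H>, where H is c^j y^k with its strands exchanged.  The j arches of H
   factor out as c^j.  In <U E, H'> the arch added by U rotates into an outer
   bridge of H', so by U e_n = u_n e_n each of the k bridges of H contributes
   a factor u_n; what remains is <E, empty>, where the k nested chords of y^k
   give c^k, i.e. E(c).  Summing over the monomials of A gives A(u_n) E(c). *)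

Lemma index_map_in (T T' : eqType) (f : T -> T') (s : seq T) x :
  {in x :: s &, injective f} -> index (f x) (map f s) = index x s.
Proof.
elim: s => [|y s IH] injf //=.
have -> : (f y == f x) = (y == x).
  by apply/eqP/eqP => [E|->] //; apply: injf; rewrite // !inE eqxx ?orbT.
case: eqP => // _; congr _.+1; apply: IH => a b Ha Hb; apply: injf.
  by move: Ha; rewrite !inE; case/orP => ->; rewrite ?orbT.
by move: Hb; rewrite !inE; case/orP => ->; rewrite ?orbT.
Qed.

Lemma count_mem_map_inj (T T' : eqType) (f : T -> T') x (s : seq T) :
  injective f -> count_mem (f x) (map f s) = count_mem x s.
Proof. by move=> injf; rewrite count_map; apply: eq_count => y /=; rewrite inj_eq. Qed.

Fixpoint doubles {T : Type} (s : seq T) : seq T :=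
  if s is x :: s' then x :: x :: doubles s' else [::].

Lemma mem_doubles (T : eqType) (s : seq T) x : (x \in doubles s) = (x \in s).
Proof. by elim: s => [|y s IH] //=; rewrite !inE IH orbA orbb. Qed.

Lemma count_doubles (T : eqType) (s : seq T) x :
  count_mem x (doubles s) = (count_mem x s).*2.
Proof. by elim: s => [|y s IH] //=; rewrite IH; case: (y == x). Qed.

Lemma doubles_cat (T : Type) (s1 s2 : seq T) :
  doubles (s1 ++ s2) = doubles s1 ++ doubles s2.
Proof. by elim: s1 => [|x s1 IH] //=; rewrite IH. Qed.

Lemma map_doubles (T T' : Type) (f : T -> T') (s : seq T) :
  map f (doubles s) = doubles (map f s).
Proof. by elim: s => [|x s IH] //=; rewrite IH. Qed.

Definition wf_word {T : eqType} (s : seq T) : bool :=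
  all (fun t => count_mem t s == 2%N) s.

Section WellFormedWords.
Variable T : eqType.
Implicit Types (s X Y D : seq T).

Lemma perm_wf_word s1 s2 : perm_eq s1 s2 -> wf_word s1 = wf_word s2.
Proof.
move=> eq12; rewrite /wf_word (perm_all _ eq12); apply: eq_all => t.
by rewrite (permP eq12).
Qed.

Lemma wf_word_doubles X : uniq X -> wf_word (doubles X).
Proof.
move=> uX; apply/allP => t; rewrite mem_doubles => Xt.
by rewrite count_doubles count_uniq_mem // Xt.
Qed.

Lemma wf_word_palindrome Y : uniq Y -> wf_word (Y ++ rev Y).
Proof.
move=> uY; apply/allP => t; rewrite mem_cat mem_rev orbb => Yt.
by rewrite count_cat count_rev count_uniq_mem // Yt.
Qed.

Lemma wf_word_sandwich Y D : uniq Y -> wf_word D -> all (fun y => y \notin D) Y ->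
  wf_word (rev Y ++ D ++ Y).
Proof.
move=> uY /allP wfD /allP YD; apply/allP => t; rewrite !count_cat count_rev.
case: (boolP (t \in Y)) => Yt.
  by rewrite (count_memPn (YD t Yt)) count_uniq_mem // Yt.
rewrite !mem_cat mem_rev (negbTE Yt) orbF (count_memPn Yt) add0n addn0.
exact: wfD.
Qed.

End WellFormedWords.

Section Partner.
Variables (T : eqType) (x0 : T) (s : seq T).
Implicit Types (p q : 'I_(size s)).

Lemma count_mem_card r : count_mem r s = #|[set i : 'I_(size s) | nth x0 s i == r]|.
Proof.
rewrite -sum1_count (big_nth x0) big_mkord cardsE -sum1_card.
by apply: eq_bigl => i; rewrite inE.
Qed.

Definition partner p : 'I_(size s) :=
  odflt p [pick q | (q != p) && (nth x0 s q == nth x0 s p)].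

Lemma partner_id p : count_mem (nth x0 s p) s = 1%N -> partner p = p.
Proof.
rewrite /partner; case: pickP => [q /andP[qp sq] | _] //= cnt1.
have := cardsD1 p [set i : 'I_(size s) | nth x0 s i == nth x0 s p].
rewrite -count_mem_card cnt1 inE eqxx /= => /eqP; rewrite eqSS eq_sym.
move=> /eqP/cards0_eq A0.
by have := in_set0 q; rewrite -A0 !inE qp sq.
Qed.

Lemma partner_uniq p q : q != p -> nth x0 s q = nth x0 s p ->
  (forall i, i != p -> nth x0 s i = nth x0 s p -> i = q) -> partner p = q.
Proof.
move=> qp sq uq; rewrite /partner; case: pickP => [q' /andP[q'p /eqP sq'] | none] /=.
  exact: uq.
by move: (none q); rewrite qp sq eqxx.
Qed.

Lemma partner_spec p : count_mem (nth x0 s p) s = 2%N ->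
  [/\ partner p != p, nth x0 s (partner p) = nth x0 s p, partner (partner p) = p &
      forall i : 'I_(size s), nth x0 s i = nth x0 s p -> i = p \/ i = partner p].
Proof.
move=> cnt2; set A := [set i : 'I_(size s) | nth x0 s i == nth x0 s p].
have /cards1P[q Aq] : #|A :\ p| == 1%N.
  by have := cardsD1 p A; rewrite -count_mem_card cnt2 inE eqxx => -[->].
have /setD1P[qp /[!inE] /eqP sq] : q \in A :\ p by rewrite Aq set11.
have uq i : i != p -> nth x0 s i = nth x0 s p -> i = q.
  by move=> ip si; apply/set1P; rewrite -Aq !inE ip si eqxx.
have -> : partner p = q by apply: partner_uniq.
split => //.
- apply: partner_uniq; rewrite 1?eq_sym ?sq //.
  move=> i iq si.
  by case: (eqVneq i p) => // ip; case/eqP: iq; apply: uq.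
- move=> i si; case: (eqVneq i p) => [->|ip]; first by left.
  by right; apply: uq.
Qed.

Lemma wf_word_count_behead x p : wf_word (x :: s) ->
  if nth x0 s p == x then count_mem x s = 1%N else count_mem (nth x0 s p) s = 2%N.
Proof.
move=> /allP wfxs; case: eqP => [E|E].
  by move: (wfxs x (mem_head _ _)) => /= /eqP; rewrite eqxx => -[].
have sp : nth x0 s p \in x :: s by rewrite inE mem_nth ?orbT.
by move: (wfxs _ sp) => /= /eqP; case: eqP => [E'|_] //; case: E.
Qed.

Lemma partnerK x : wf_word (x :: s) -> involutive partner.
Proof.
move=> wfxs p; have := wf_word_count_behead p wfxs; case: eqP => [E|_] cnt.
  by rewrite !partner_id // E.
by case: (partner_spec cnt).
Qed.

End Partner.

Definition tuple_set {T : Type} n (x0 : T) (f : n.-tuple T) i (d : T) : n.-tuple T :=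
  insubd f (set_nth x0 f i d).

Lemma nth_tuple_set (T : Type) n (x0 : T) (f : n.-tuple T) i d k : (i < n)%N ->
  nth x0 (tuple_set x0 f i d) k = if k == i then d else nth x0 f k.
Proof.
move=> lt_in; rewrite /tuple_set val_insubd size_set_nth size_tuple (maxn_idPr lt_in).
by rewrite eqxx nth_set_nth.
Qed.

Section SL2Shares.
Variable C : numClosedFieldType.
Local Notation FA := (FA C).

(* Elements of the tensor algebra on x_1, x_2, x_3 are handled through their
   coefficient functions on words. *)
Definition word := seq 'I_3.
Definition tens := word -> C.
Implicit Types (g h : tens) (w : word).

Definition monom (z : word) : tens := fun w => (z == w)%:R.

Lemma fa_coefE (F : FA) w : fa_coef F w = \sum_(t <- F) t.1 * monom t.2 w.
Proof.
rewrite /fa_coef big_mkcond /=; apply: eq_bigr => t _.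
by rewrite /monom; case: eqP => _; rewrite ?mulr1 ?mulr0.
Qed.

Lemma fa_coef_nil w : fa_coef ([::] : FA) w = 0.
Proof. by rewrite /fa_coef big_nil. Qed.

Lemma fa_coef_cat (F G : FA) w : fa_coef (F ++ G) w = fa_coef F w + fa_coef G w.
Proof. by rewrite /fa_coef big_cat. Qed.

Lemma fa_coef_flatten (I : Type) (s : seq I) (F : I -> FA) w :
  fa_coef (flatten [seq F i | i <- s]) w = \sum_(i <- s) fa_coef (F i) w.
Proof.
elim: s => [|i s IH] /=; first by rewrite fa_coef_nil big_nil.
by rewrite fa_coef_cat IH big_cons.
Qed.

Lemma fa_coef_scale k (F : FA) w : fa_coef (fa_scale k F) w = k * fa_coef F w.
Proof.
rewrite !fa_coefE /fa_scale big_map mulr_sumr; apply: eq_bigr => t _ /=.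
by rewrite mulrA.
Qed.

Lemma fa_coef_mul (F G : FA) w :
  fa_coef (fa_mul F G) w = \sum_(a <- F) \sum_(b <- G) a.1 * b.1 * monom (a.2 ++ b.2) w.
Proof. by rewrite fa_coefE /fa_mul big_allpairs_dep. Qed.

Definition lmulw (u : word) g : tens :=
  fun w => if take (size u) w == u then g (drop (size u) w) else 0.

Lemma eq_lmulw u g h : g =1 h -> lmulw u g =1 lmulw u h.
Proof. by move=> eq_gh w; rewrite /lmulw eq_gh. Qed.

Lemma lmulw_monom u z : lmulw u (monom z) =1 monom (u ++ z).
Proof.
move=> w; rewrite /lmulw /monom; case: eqP => [uw|uw].
  by rewrite -[in RHS](cat_take_drop (size u) w) uw eqseq_cat // eqxx.
by case: eqP => // zw; case: uw; rewrite -zw take_size_cat.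
Qed.

Lemma lmulw_sum (I : Type) (s : seq I) (F : I -> tens) u w :
  lmulw u (fun w => \sum_(i <- s) F i w) w = \sum_(i <- s) lmulw u (F i) w.
Proof. by rewrite /lmulw; case: ifP => // _; rewrite big1. Qed.

Lemma lmulw_scale u k g w : lmulw u (fun w => k * g w) w = k * lmulw u g w.
Proof. by rewrite /lmulw; case: ifP; rewrite ?mulr0. Qed.

Lemma lmulw_sub u g h w : lmulw u (fun w => g w - h w) w = lmulw u g w - lmulw u h w.
Proof. by rewrite /lmulw; case: ifP; rewrite ?subr0. Qed.

Lemma fa_coef_lmul u (F : FA) : fa_coef (fa_mul [:: (1, u)] F) =1 lmulw u (fa_coef F).
Proof.
move=> w; rewrite fa_coef_mul big_seq1 (eq_lmulw u (fa_coefE F)) lmulw_sum.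
by apply: eq_bigr => b _ /=; rewrite lmulw_scale lmulw_monom mul1r.
Qed.

Definition lie_sc (a b d : 'I_3) : C := 'i * eps C a b d.

Lemma lie_sc_xx a d : lie_sc a a d = 0.
Proof.
by rewrite /lie_sc; case: a => [[|[|[|a]]] Ha] //; case: d => [[|[|[|d]]] Hd]; rewrite mulr0.
Qed.

Lemma lie_sc_swap a b d : lie_sc a d b = - lie_sc a b d.
Proof.
rewrite /lie_sc -mulrN; congr (_ * _).
by case: a => [[|[|[|a]]] Ha] //; case: b => [[|[|[|b]]] Hb] //;
  case: d => [[|[|[|d]]] Hd] //=; rewrite /eps /= ?oppr0 ?opprK.
Qed.

Definition rel_coef k u a b v : tens := fun w =>
  k * (monom (u ++ a :: b :: v) w - monom (u ++ b :: a :: v) w -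
       \sum_(d <- enum 'I_3) lie_sc a b d * monom (u ++ d :: v) w).

Lemma fa_coef_ideal_gen k u a b v : fa_coef (ideal_gen k u a b v) =1 rel_coef k u a b v.
Proof.
move=> w; rewrite /ideal_gen fa_coef_scale fa_coef_lmul /rel_coef; congr (_ * _).
have lie_relE w' : fa_coef (fa_mul (lie_rel C a b) [:: (1, v)]) w' =
    monom (a :: b :: v) w' - monom (b :: a :: v) w' -
    \sum_(d <- enum 'I_3) lie_sc a b d * monom (d :: v) w'.
  rewrite fa_coef_mul /lie_rel /= !big_cons big_map /= !big_nil !addr0 !mulr1 mul1r.
  rewrite addrA mulN1r -sumrN; congr (_ + _).
  by apply: eq_bigr => d _; rewrite big_seq1 mulr1 mulNr.
rewrite (eq_lmulw u lie_relE) !lmulw_sub lmulw_sum !lmulw_monom; congr (_ - _ - _).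
by apply: eq_bigr => d _; rewrite lmulw_scale lmulw_monom.
Qed.

Definition rel_comb (R : seq (C * word * 'I_3 * 'I_3 * word)) : FA :=
  flatten [seq (let: (k, u, a, b, v) := r in ideal_gen k u a b v) | r <- R].

Lemma fa_coef_rel_comb R w :
  fa_coef (rel_comb R) w = \sum_(r <- R) (let: (k, u, a, b, v) := r in rel_coef k u a b v w).
Proof.
rewrite /rel_comb fa_coef_flatten; apply: eq_bigr => [[[[[k u] a] b] v]] _.
exact: fa_coef_ideal_gen.
Qed.

Definition in_relI g : Prop := exists R, forall w, g w = fa_coef (rel_comb R) w.

Lemma in_idealE (F : FA) : in_ideal F = in_relI (fa_coef F).
Proof. by []. Qed.

Lemma eq_in_relI g h : g =1 h -> in_relI g -> in_relI h.
Proof. by move=> eq_gh [R gR]; exists R => w; rewrite -eq_gh. Qed.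

Lemma in_relI0 : in_relI (fun _ => 0).
Proof. by exists [::] => w; rewrite fa_coef_nil. Qed.

Lemma in_relID g h : in_relI g -> in_relI h -> in_relI (fun w => g w + h w).
Proof.
move=> [R1 gR1] [R2 hR2]; exists (R1 ++ R2) => w.
by rewrite /rel_comb map_cat flatten_cat fa_coef_cat gR1 hR2.
Qed.

Lemma in_relIZ k g : in_relI g -> in_relI (fun w => k * g w).
Proof.
move=> [R gR]; exists [seq (let: (k', u, a, b, v) := r in (k * k', u, a, b, v)) | r <- R] => w.
rewrite gR !fa_coef_rel_comb big_map mulr_sumr.
by apply: eq_bigr => [[[[[k' u] a] b] v]] _; rewrite /rel_coef mulrA.
Qed.

Lemma in_relI_lmulw u g : in_relI g -> in_relI (lmulw u g).
Proof.
move=> [R gR]; exists [seq (let: (k, u', a, b, v) := r in (k, u ++ u', a, b, v)) | r <- R] => w.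
rewrite (eq_lmulw u gR) (eq_lmulw u (fa_coef_rel_comb R)) lmulw_sum fa_coef_rel_comb big_map.
apply: eq_bigr => [[[[[k u'] a] b] v]] _ /=.
rewrite /rel_coef lmulw_scale !lmulw_sub lmulw_sum !lmulw_monom !catA.
by congr (_ * (_ - _ - _)); apply: eq_bigr => d _; rewrite lmulw_scale lmulw_monom catA.
Qed.

Lemma in_relI_sum (I : Type) (s : seq I) (F : I -> tens) :
  (forall i, in_relI (F i)) -> in_relI (fun w => \sum_(i <- s) F i w).
Proof.
move=> FR; elim: s => [|i s IH]; first by apply: eq_in_relI in_relI0 => w; rewrite big_nil.
by apply: eq_in_relI (in_relID (FR i) IH) => w; rewrite big_cons.
Qed.

Definition equivU g h : Prop := in_relI (fun w => g w - h w).

Lemma eq_equivU g h : g =1 h -> equivU g h.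
Proof. by move=> eq_gh; apply: eq_in_relI in_relI0 => w; rewrite eq_gh subrr. Qed.

Lemma equivU_refl g : equivU g g.
Proof. exact: eq_equivU. Qed.

Lemma equivU_sym g h : equivU g h -> equivU h g.
Proof. by move=> gh; apply: eq_in_relI (in_relIZ (-1) gh) => w; rewrite mulN1r opprB. Qed.

Lemma equivU_trans g h k : equivU g h -> equivU h k -> equivU g k.
Proof. by move=> gh hk; apply: eq_in_relI (in_relID gh hk) => w; rewrite addrA subrK. Qed.

Lemma eq_equivUl g g' h : g =1 g' -> equivU g' h -> equivU g h.
Proof. by move=> eq_g; apply: equivU_trans (eq_equivU eq_g). Qed.

Lemma eq_equivUr g h h' : h =1 h' -> equivU g h' -> equivU g h.
Proof. by move=> eq_h gh; apply: equivU_trans gh (eq_equivU _) => w; rewrite eq_h. Qed.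

Lemma equivUD g1 h1 g2 h2 : equivU g1 h1 -> equivU g2 h2 ->
  equivU (fun w => g1 w + g2 w) (fun w => h1 w + h2 w).
Proof. by move=> e1 e2; apply: eq_in_relI (in_relID e1 e2) => w; rewrite opprD addrACA. Qed.

Lemma equivUZ k g h : equivU g h -> equivU (fun w => k * g w) (fun w => k * h w).
Proof. by move=> gh; apply: eq_in_relI (in_relIZ k gh) => w; rewrite mulrBr. Qed.

Lemma equivU_lmulw u g h : equivU g h -> equivU (lmulw u g) (lmulw u h).
Proof. by move=> gh; apply: eq_in_relI (in_relI_lmulw u gh) => w; rewrite lmulw_sub. Qed.

Lemma equivU_sum (I : Type) (s : seq I) (F G : I -> tens) :
  (forall i, equivU (F i) (G i)) ->
  equivU (fun w => \sum_(i <- s) F i w) (fun w => \sum_(i <- s) G i w).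
Proof. by move=> FG; apply: eq_in_relI (in_relI_sum s FG) => w; rewrite sumrB. Qed.

Lemma eqU_equivU (F G : FA) : eqU F G <-> equivU (fa_coef F) (fa_coef G).
Proof.
rewrite /eqU in_idealE; split; apply: eq_in_relI => w;
  by rewrite fa_coef_cat fa_coef_scale mulN1r.
Qed.

Lemma equivU_lie u a b v :
  equivU (monom (u ++ a :: b :: v))
         (fun w => monom (u ++ b :: a :: v) w +
                   \sum_(d <- enum 'I_3) lie_sc a b d * monom (u ++ d :: v) w).
Proof.
have relR : in_relI (rel_coef 1 u a b v).
  by exists [:: (1, u, a, b, v)] => w; rewrite fa_coef_rel_comb big_seq1.
by apply: eq_in_relI relR => w; rewrite /rel_coef mul1r opprD addrA.
Qed.

Definition cmul g : tens := fun w => \sum_(a <- enum 'I_3) lmulw [:: a; a] g w.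

Lemma eq_cmul g h : g =1 h -> cmul g =1 cmul h.
Proof. by move=> eq_gh w; apply: eq_bigr => a _; rewrite (eq_lmulw _ eq_gh). Qed.

Lemma cmul_sum (I : Type) (s : seq I) (F : I -> tens) w :
  cmul (fun w => \sum_(i <- s) F i w) w = \sum_(i <- s) cmul (F i) w.
Proof. by rewrite /cmul (eq_bigr _ (fun a _ => lmulw_sum _ _ _ _)) exchange_big. Qed.

Lemma cmul_scale k g w : cmul (fun w => k * g w) w = k * cmul g w.
Proof. by rewrite /cmul mulr_sumr; apply: eq_bigr => a _; rewrite lmulw_scale. Qed.

Lemma equivU_cmul g h : equivU g h -> equivU (cmul g) (cmul h).
Proof. by move=> gh; apply: equivU_sum => a; apply: equivU_lmulw. Qed.

Lemma fa_coef_casimir (F : FA) : fa_coef (fa_mul (casimir C) F) =1 cmul (fa_coef F).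
Proof.
move=> w; rewrite fa_coef_mul /casimir big_map /cmul; apply: eq_bigr => a _.
rewrite (eq_lmulw _ (fa_coefE F)) lmulw_sum; apply: eq_bigr => b _ /=.
by rewrite mul1r lmulw_scale lmulw_monom.
Qed.

Definition cmuln j g : tens := iter j cmul g.

Lemma eq_cmuln j g h : g =1 h -> cmuln j g =1 cmuln j h.
Proof. by elim: j => [|j IH] eq_gh //=; apply/eq_cmul/IH. Qed.

Lemma equivU_cmuln j g h : equivU g h -> equivU (cmuln j g) (cmuln j h).
Proof. by elim: j => [|j IH] gh //=; apply/equivU_cmul/IH. Qed.

Lemma cmuln_sum j (I : Type) (s : seq I) (F : I -> tens) w :
  cmuln j (fun w => \sum_(i <- s) F i w) w = \sum_(i <- s) cmuln j (F i) w.
Proof. by elim: j w => [|j IH] w //=; rewrite (eq_cmul IH) cmul_sum. Qed.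

Lemma cmuln_scale j k g w : cmuln j (fun w => k * g w) w = k * cmuln j g w.
Proof. by elim: j w => [|j IH] w //=; rewrite (eq_cmul IH) cmul_scale. Qed.

Definition pcmul (p : {poly C}) g : tens := fun w => \sum_(j < size p) p`_j * cmuln j g w.

Implicit Types (p q : {poly C}).

Lemma pcmulE N p g w : (size p <= N)%N -> pcmul p g w = \sum_(j < N) p`_j * cmuln j g w.
Proof.
move=> leN; rewrite /pcmul (big_ord_widen N (fun j => p`_j * cmuln j g w)) //.
rewrite big_mkcond; apply: eq_bigr => i _; case: ltnP => // le_i.
by rewrite nth_default // mul0r.
Qed.

Lemma eq_pcmul p g h : g =1 h -> pcmul p g =1 pcmul p h.
Proof. by move=> eq_gh w; apply: eq_bigr => j _; rewrite (eq_cmuln j eq_gh). Qed.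

Lemma equivU_pcmul p g h : equivU g h -> equivU (pcmul p g) (pcmul p h).
Proof. by move=> gh; apply: equivU_sum => j; apply/equivUZ/equivU_cmuln. Qed.

Lemma pcmul0 g w : pcmul 0 g w = 0.
Proof. by rewrite /pcmul size_poly0 big_ord0. Qed.

Lemma pcmulC c g w : pcmul c%:P g w = c * g w.
Proof. by rewrite (@pcmulE 1) ?size_polyC ?leq_b1 // big_ord1 coefC. Qed.

Lemma pcmulD p q g w : pcmul (p + q) g w = pcmul p g w + pcmul q g w.
Proof.
rewrite !(@pcmulE (maxn (size p) (size q))) ?leq_maxl ?leq_maxr ?size_add //.
by rewrite -big_split; apply: eq_bigr => j _; rewrite coefD mulrDl.
Qed.

Lemma pcmulCM c p g w : pcmul (c%:P * p) g w = c * pcmul p g w.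
Proof.
rewrite !(@pcmulE (size p)) //; last by rewrite mul_polyC size_scale_leq.
by rewrite mulr_sumr; apply: eq_bigr => j _; rewrite coefCM mulrA.
Qed.

Lemma pcmul_suml (I : Type) (s : seq I) (P : I -> {poly C}) g w :
  pcmul (\sum_(i <- s) P i) g w = \sum_(i <- s) pcmul (P i) g w.
Proof.
elim: s => [|i s IH]; first by rewrite !big_nil pcmul0.
by rewrite !big_cons pcmulD IH.
Qed.

Lemma pcmul_sumr p (I : Type) (s : seq I) (F : I -> tens) w :
  pcmul p (fun w => \sum_(i <- s) F i w) w = \sum_(i <- s) pcmul p (F i) w.
Proof.
rewrite /pcmul exchange_big /=; apply: eq_bigr => j _.
by rewrite cmuln_sum mulr_sumr.
Qed.

Lemma pcmul_scale p k g w : pcmul p (fun w => k * g w) w = k * pcmul p g w.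
Proof.
by rewrite /pcmul mulr_sumr; apply: eq_bigr => j _; rewrite cmuln_scale mulrCA.
Qed.

Lemma pcmul_cmul p g : pcmul p (cmul g) =1 cmul (pcmul p g).
Proof.
move=> w; rewrite /pcmul cmul_sum; apply: eq_bigr => j _.
by rewrite cmul_scale /cmuln -iterSr.
Qed.

Lemma pcmulMX p g : pcmul (p * 'X) g =1 pcmul p (cmul g).
Proof.
move=> w; rewrite (@pcmulE (size p).+1); last first.
  by apply: leq_trans (size_polyMleq _ _) _; rewrite size_polyX addn2.
rewrite big_ord_recl coefMX /= mul0r add0r /pcmul; apply: eq_bigr => j _.
by rewrite coefMX /= /cmuln -iterSr.
Qed.

Lemma pcmulM p q g : pcmul (p * q) g =1 pcmul p (pcmul q g).
Proof.
elim/poly_ind: p q g => [|p c IH] q g w; first by rewrite mul0r !pcmul0.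
rewrite mulrDl -mulrA pcmulD pcmulCM IH pcmulD pcmulC pcmulMX; congr (_ + _).
by apply: eq_pcmul => w'; rewrite mulrC pcmulMX pcmul_cmul.
Qed.

Lemma pcmulXn k g : pcmul 'X^k g =1 cmuln k g.
Proof.
elim: k g => [|k IH] g w; first by rewrite expr0 pcmulC mul1r.
by rewrite exprSr pcmulMX IH /cmuln iterSr.
Qed.

Lemma pcmul_cmuln p j g : pcmul p (cmuln j g) =1 cmuln j (pcmul p g).
Proof. by elim: j g => [|j IH] g w //=; rewrite pcmul_cmul; apply: eq_cmul; exact: IH. Qed.

Lemma fa_coef_poly p : fa_coef (fa_poly p) =1 pcmul p (monom [::]).
Proof.
move=> w; rewrite /fa_poly fa_coef_flatten.
have -> : iota 0 (size p) = index_iota 0 (size p) by rewrite /index_iota subn0.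
rewrite big_mkord; apply: eq_bigr => j _; rewrite fa_coef_scale; congr (_ * _).
elim: (nat_of_ord j) w => [|k IH] w /=; first by rewrite fa_coefE big_seq1 mul1r.
by rewrite fa_coef_casimir; apply: eq_cmul.
Qed.

Definition colouring (v : seq nat) w : bool := w == [seq nth ord0 w (index t v) | t <- v].

Definition wsl2 (v : seq nat) : tens := fun w => (colouring v w)%:R.

Definition colour (L : seq nat) (f : seq 'I_3) (t : nat) : 'I_3 := nth ord0 f (index t L).

Definition paint (L : seq nat) (f : seq 'I_3) (v : seq nat) : word := map (colour L f) v.

Lemma colouring_paint L f v : {subset v <= L} -> colouring v (paint L f v).
Proof.
move=> vL; apply/eqP; rewrite {1}/paint; apply/eq_in_map => t vt.
by rewrite /paint /colour (nth_map 0%N) ?index_mem // nth_index.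
Qed.

Lemma wsl2E (L : seq nat) v : uniq L -> v =i L ->
  wsl2 v =1 fun w => \sum_(f : (size L).-tuple 'I_3) monom (paint L f v) w.
Proof.
move=> uL vL w; have sub_vL : {subset v <= L} by move=> t; rewrite vL.
rewrite /wsl2 /monom; case: (boolP (colouring v w)) => [/eqP wv|not_col]; last first.
  by rewrite big1 // => f _; case: eqP => // fw; case/negP: not_col; rewrite -fw colouring_paint.
pose f0 := [tuple nth ord0 w (index (nth 0%N L i) v) | i < size L].
have f0w : paint L f0 v = w.
  rewrite [RHS]wv; apply/eq_in_map => t vt.
  have lt_tL : (index t L < size L)%N by rewrite index_mem -vL.
  rewrite /colour -[nth ord0 f0 _]/(nth ord0 f0 (Ordinal lt_tL)) -tnth_nth tnth_mktuple /=.
  by rewrite nth_index // -vL.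
rewrite (bigD1 f0) //= f0w eqxx big1 ?addr0 // => f ff0.
case: eqP => // fw; case/eqP: ff0.
apply: eq_from_tnth => i; rewrite tnth_mktuple -fw /paint.
have lt_i : (index (nth 0%N L i) v < size v)%N by rewrite index_mem vL mem_nth.
by rewrite (nth_map 0%N) // nth_index ?vL ?mem_nth // /colour index_uniq // (tnth_nth ord0).
Qed.

Lemma fa_coef_wt_word v : fa_coef (wt_word C v) =1 wsl2 v.
Proof.
move=> w; rewrite fa_coefE /wt_word big_map big_enum /= (wsl2E (undup_uniq v)).
  by apply: eq_bigr => f _; rewrite mul1r.
by move=> t; rewrite mem_undup.
Qed.

Lemma wsl2_map (g : nat -> nat) v : {in v &, injective g} -> wsl2 (map g v) =1 wsl2 v.
Proof.
move=> injg w; rewrite /wsl2 /colouring -map_comp; congr ((w == _)%:R).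
apply/eq_in_map => t vt /=; rewrite index_map_in // => a b; rewrite !inE => ta tb.
by apply: injg; [case/orP: ta => [/eqP->|] | case/orP: tb => [/eqP->|]].
Qed.

Lemma wsl2_nil : wsl2 [::] =1 monom [::].
Proof. by move=> w; rewrite /wsl2 /colouring /monom eq_sym. Qed.

Lemma wsl2_isolated z v : z \notin v -> wsl2 (z :: z :: v) =1 cmul (wsl2 v).
Proof.
move=> zv [|b1 [|b2 w]].
- by rewrite /wsl2 /colouring /cmul big1 // => a _; rewrite /lmulw.
- rewrite /wsl2 /colouring /cmul big1 /=; first by rewrite eqseq_cons andbF.
  by move=> a _; rewrite /lmulw /= eqseq_cons andbF.
have diag a : lmulw [:: a; a] (wsl2 v) [:: b1, b2 & w] =
              if [:: b1; b2] == [:: a; a] then wsl2 v w else 0.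
  by rewrite /lmulw /= take0 drop0.
rewrite /cmul (eq_bigr _ (fun a _ => diag a)).
have -> : \sum_(a <- enum 'I_3) (if [:: b1; b2] == [:: a; a] then wsl2 v w else 0) =
          (b1 == b2)%:R * wsl2 v w.
  case: (eqVneq b1 b2) => [<-|b12]; last first.
    rewrite mul0r big1 // => a _; case: eqP => // -[b1a b2a].
    by rewrite b1a b2a eqxx in b12.
  rewrite (bigD1_seq b1) ?mem_enum ?enum_uniq //= eqxx mul1r big1_seq ?addr0 // => a /andP[ab1 _].
  by rewrite !eqseq_cons eq_sym (negbTE ab1).
rewrite /wsl2 /colouring /= eqxx !eqseq_cons eqxx /= eq_sym -natrM mulnb.
congr ((_ && (w == _))%:R); apply/eq_in_map => t vt /=.
by have -> : (z == t) = false by apply: contraNF zv => /eqP->.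
Qed.

Lemma wsl2_doubles X v : uniq X -> all (fun x => x \notin v) X ->
  wsl2 (doubles X ++ v) =1 cmuln (size X) (wsl2 v).
Proof.
elim: X => [|x X IH] //= /andP[xX uX] /andP[xv Xv] w.
rewrite wsl2_isolated; last by rewrite mem_cat mem_doubles negb_or xX.
by apply: eq_cmul => w'; apply: IH.
Qed.

Definition comm_corr (a : 'I_3) (z : word) : tens := fun w =>
  \sum_(0 <= p < size z) \sum_(d <- enum 'I_3)
    lie_sc a (nth ord0 z p) d * monom (set_nth ord0 z p d) w.

Lemma equivU_move_letter (a : 'I_3) (u z : word) :
  equivU (monom (u ++ a :: z))
    (fun w => monom (u ++ rcons z a) w + \sum_(0 <= p < size z) \sum_(d <- enum 'I_3)
                lie_sc a (nth ord0 z p) d * monom (u ++ set_nth ord0 z p d) w).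
Proof.
elim: z u => [|b z IH] u; first by apply: eq_equivU => w; rewrite big_geq // addr0.
apply: equivU_trans (equivU_lie u a b z) _.
rewrite -cat_rcons.
apply: equivU_trans (equivUD (IH (rcons u b)) (equivU_refl _)) _.
apply: eq_equivU => w /=; rewrite big_nat_recl // /= !cat_rcons -addrA; congr (_ + _).
rewrite addrC; congr (_ + _).
by apply: eq_bigr => p _; apply: eq_bigr => d _; rewrite cat_rcons.
Qed.

Lemma colour_tuple_set L n (f : n.-tuple 'I_3) r d t : (index r L < n)%N ->
  colour L (tuple_set ord0 f (index r L) d) t =
  if index t L == index r L then d else colour L f t.
Proof. by move=> lt_r; rewrite /colour nth_tuple_set. Qed.

Section CommutatorCancellation.
Variables (x : nat) (s : seq nat).
Hypothesis wf_xs : wf_word (x :: s).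
Local Notation L := (undup (x :: s)).
Local Notation n := (size L).

Let xL : x \in L.
Proof. by rewrite mem_undup mem_head. Qed.

Let sL : {subset s <= L}.
Proof. by move=> t st; rewrite mem_undup inE st orbT. Qed.

Definition corr_at (w : word) (p : 'I_(size s)) : C :=
  \sum_(f : n.-tuple 'I_3) \sum_(d : 'I_3)
    lie_sc (colour L f x) (colour L f (nth 0%N s p)) d *
    monom (set_nth ord0 (paint L f s) p d) w.

Lemma set_nth_paint_recolour (f : n.-tuple 'I_3) (d : 'I_3) (p : 'I_(size s)) :
  count_mem (nth 0%N s p) s = 2%N ->
  set_nth ord0 (paint L (tuple_set ord0 f (index (nth 0%N s p) L) d) s)
          (partner 0%N p) (colour L f (nth 0%N s p)) =
  set_nth ord0 (paint L f s) p d.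
Proof.
move=> cnt; have [qp sq _ occ] := partner_spec cnt.
set q := partner 0%N p in qp sq occ *; set r := nth 0%N s p in cnt sq occ *.
have lt_r : (index r L < n)%N by rewrite index_mem sL ?mem_nth.
apply: (@eq_from_nth _ ord0).
  by rewrite !size_set_nth !size_map (maxn_idPr (ltn_ord q)) (maxn_idPr (ltn_ord p)).
move=> i; rewrite size_set_nth size_map (maxn_idPr (ltn_ord q)) => lt_i.
set L' := undup (x :: s) in lt_r *; rewrite !nth_set_nth /=.
case: (eqVneq i q) => [->|iq].
  by rewrite ifN // /paint (nth_map 0%N) ?sq.
case: (eqVneq i p) => [->|ip].
  by rewrite /paint (nth_map 0%N) // colour_tuple_set // eqxx.
have si : nth 0%N s i != r.
  by apply/eqP => /(occ (Ordinal lt_i)) [/(congr1 val) /= ei | /(congr1 val) /= ei];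
    [move: ip | move: iq]; rewrite ei eqxx.
rewrite /paint !(nth_map 0%N) // colour_tuple_set //; case: eqP => // eq_ir; case/eqP: si.
exact: index_inj (sL (mem_nth 0%N lt_i)) (sL (mem_nth 0%N (ltn_ord p))) eq_ir.
Qed.

(* Recolouring the chord through position p exchanges the correction terms of
   its two endpoints, with a sign from the antisymmetry of eps. *)
Lemma corr_at_partner w (p : 'I_(size s)) : corr_at w (partner 0%N p) = - corr_at w p.
Proof.
have := wf_word_count_behead 0%N p wf_xs; case: eqP => [sp_x|sp_x] cnt.
  have -> : partner 0%N p = p by rewrite partner_id // sp_x.
  suff -> : corr_at w p = 0 by rewrite oppr0.
  by rewrite /corr_at big1 // => f _; rewrite big1 // => d _; rewrite sp_x lie_sc_xx mul0r.
have [_ sq _ _] := partner_spec cnt.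
set r := nth 0%N s p in sp_x cnt sq *.
have lt_r : (index r L < n)%N by rewrite index_mem sL ?mem_nth.
have xr : index x L != index r L.
  apply/eqP => eq_xr; apply: sp_x; apply/esym.
  exact: index_inj xL (sL (mem_nth 0%N (ltn_ord p))) eq_xr.
pose Psi (fd : n.-tuple 'I_3 * 'I_3) :=
  (tuple_set ord0 fd.1 (index r L) fd.2, colour L fd.1 r).
have PsiK : involutive Psi.
  move=> [f d]; rewrite /Psi /= colour_tuple_set // eqxx; congr (_, _).
  apply: val_inj; apply: (@eq_from_nth _ ord0); first by rewrite !size_tuple.
  by move=> k _; rewrite !nth_tuple_set //; case: eqP => // ->.
rewrite /corr_at sq !pair_big /= (reindex_inj (inv_inj PsiK)) /= -sumrN.
apply: eq_bigr => [[f d]] _ /=.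
by rewrite !colour_tuple_set // (negbTE xr) eqxx lie_sc_swap mulNr set_nth_paint_recolour.
Qed.

Lemma sum_comm_corr w :
  \sum_(f : n.-tuple 'I_3) comm_corr (colour L f x) (paint L f s) w = 0.
Proof.
have -> : \sum_(f : n.-tuple 'I_3) comm_corr (colour L f x) (paint L f s) w =
          \sum_(p < size s) corr_at w p.
  rewrite /corr_at exchange_big /=; apply: eq_bigr => f _.
  rewrite /comm_corr {1}/paint size_map big_mkord; apply: eq_bigr => p _.
  by rewrite big_enum /=; apply: eq_bigr => d _; rewrite {1}/paint (nth_map 0%N).
have sum_opp : \sum_(p < size s) corr_at w p = - \sum_(p < size s) corr_at w p.
  rewrite {1}(reindex_inj (inv_inj (partnerK 0%N wf_xs))) /= -sumrN.
  by apply: eq_bigr => p _; exact: corr_at_partner.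
have : (\sum_(p < size s) corr_at w p) *+ 2 == 0 by rewrite mulr2n {1}sum_opp addNr.
by rewrite mulrn_eq0 /= => /eqP.
Qed.

End CommutatorCancellation.

Lemma wsl2_rot1 x s : wf_word (x :: s) -> equivU (wsl2 (x :: s)) (wsl2 (rcons s x)).
Proof.
move=> wf_xs; set L := undup (x :: s); have uL : uniq L := undup_uniq _.
apply: (@eq_equivUl _ (fun w => \sum_(f : (size L).-tuple 'I_3)
                                  monom (colour L f x :: paint L f s) w)).
  by apply: (wsl2E uL) => t; rewrite mem_undup.
apply: (@eq_equivUr _ _ (fun w => \sum_(f : (size L).-tuple 'I_3)
   (monom (rcons (paint L f s) (colour L f x)) w + comm_corr (colour L f x) (paint L f s) w))).
  move=> w; rewrite big_split /= sum_comm_corr // addr0.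
  rewrite (wsl2E uL); last by move=> t; rewrite mem_rcons mem_undup.
  by apply: eq_bigr => f _; rewrite /paint map_rcons.
by apply: equivU_sum => f; exact: (equivU_move_letter _ [::]).
Qed.

Lemma wsl2_rot u v : wf_word (u ++ v) -> equivU (wsl2 (u ++ v)) (wsl2 (v ++ u)).
Proof.
elim: u v => [|x u IH] v wf_uv; first by rewrite cats0; apply: equivU_refl.
apply: equivU_trans (wsl2_rot1 wf_uv) _.
rewrite -cat_rcons rcons_cat; apply: IH.
have perm_x : perm_eq (rcons (u ++ v) x) (x :: u ++ v) by rewrite perm_rcons perm_refl.
by rewrite -rcons_cat (perm_wf_word perm_x).
Qed.

Lemma wsl2_nested Z : uniq Z -> equivU (wsl2 (Z ++ rev Z)) (cmuln (size Z) (monom [::])).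
Proof.
elim: Z => [|y Z IH] /=; first by move=> _; apply: eq_equivU; exact: wsl2_nil.
case/andP => yZ uZ; have yZZ : y \notin Z ++ rev Z by rewrite mem_cat mem_rev orbb.
have wf_yyZZ : wf_word (y :: y :: (Z ++ rev Z)).
  apply/allP => t; rewrite !inE => tin /=; case: (eqVneq y t) => [<-|yt] /=.
    by rewrite (count_memPn yZZ).
  move: tin; rewrite eq_sym (negbTE yt) /= => tZZ.
  by move/allP: (wf_word_palindrome uZ) => /(_ t tZZ).
rewrite rev_cons -cats1 catA cats1 -rcons_cons.
apply: equivU_trans (equivU_sym (wsl2_rot1 wf_yyZZ)) _.
exact: eq_equivUl (wsl2_isolated yZZ) (equivU_cmul (IH uZ)).
Qed.

Lemma tagL_inj : injective tagL.
Proof. by move=> a b; rewrite /tagL; lia. Qed.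

Lemma tagR_inj : injective tagR.
Proof. by move=> a b; rewrite /tagR; lia. Qed.

Lemma wf_word_tags a b : wf_word a -> wf_word b -> wf_word (map tagL a ++ map tagR b).
Proof.
have notLR t (s : seq nat) : count_mem (tagL t) (map tagR s) = 0%N.
  by apply/count_memPn/mapP => -[y _]; rewrite /tagL /tagR; lia.
have notRL t (s : seq nat) : count_mem (tagR t) (map tagL s) = 0%N.
  by apply/count_memPn/mapP => -[y _]; rewrite /tagL /tagR; lia.
move=> /allP wfa /allP wfb; apply/allP => t; rewrite mem_cat => /orP[] /mapP[y ys ->].
  by rewrite count_cat count_mem_map_inj ?notLR ?addn0 ?wfa //; exact: tagL_inj.
by rewrite count_cat count_mem_map_inj ?notRL ?wfb //; exact: tagR_inj.
Qed.

Lemma wf_share_join P Q : wf_share P -> wf_share Q -> wf_word (joinw P Q).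
Proof.
move=> wfP wfQ.
have perm_j : perm_eq (joinw P Q) (map tagL (P.1 ++ P.2) ++ map tagR (Q.1 ++ Q.2)).
  by rewrite /joinw !map_cat -!catA perm_cat2l perm_catCA perm_refl.
by rewrite (perm_wf_word perm_j) wf_word_tags.
Qed.

Lemma wf_Ushare Q : wf_share Q -> wf_share (Ushare Q).
Proof.
move=> wfQ; have perm_U : perm_eq ((Ushare Q).1 ++ (Ushare Q).2)
                                  (map tagL [:: 0; 0]%N ++ map tagR (Q.1 ++ Q.2)).
  by apply/permP => a; rewrite /Ushare /tagL /= map_cat !count_cat /= double0; lia.
by rewrite /wf_share -/(wf_word _) (perm_wf_word perm_U) wf_word_tags.
Qed.

(* The chord labels of the k-th cross power of a one-chord share. *)
Fixpoint labels (k : nat) : seq nat :=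
  if k is k'.+1 then rcons (map tagL (labels k')) 1%N else [::].

Lemma uniq_labels k : uniq (labels k).
Proof.
elim: k => [|k IH] //=; rewrite rcons_uniq map_inj_uniq ?IH ?andbT //; last exact: tagL_inj.
by apply/mapP => -[x _]; rewrite /tagL; lia.
Qed.

Lemma size_labels k : size (labels k) = k.
Proof. by elim: k => [|k IH] //=; rewrite size_rcons size_map IH. Qed.

Lemma powS_arch j : powS C arch j = [:: (1, (doubles (labels j), [::]))].
Proof.
elim: j => [|j IH] //=; rewrite IH /crossC /= mulr1 /cross /= -cats1 doubles_cat.
by rewrite map_doubles.
Qed.

Lemma powS_bridge k : powS C bridge k = [:: (1, (labels k, rev (labels k)))].
Proof.
elim: k => [|k IH] //=; rewrite IH /crossC /= mulr1 /cross /= rev_rcons map_rev.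
by rewrite cats1.
Qed.

(* The share c^j y^k. *)
Definition mono_share (j k : nat) : share :=
  cross (doubles (labels j), [::]) (labels k, rev (labels k)).

Lemma wf_mono_share j k : wf_share (mono_share j k).
Proof.
have perm_jk : perm_eq ((mono_share j k).1 ++ (mono_share j k).2)
   (map tagL (doubles (labels j)) ++ map tagR (labels k ++ rev (labels k))).
  by rewrite /mono_share /cross /= cats0 map_cat catA perm_refl.
rewrite /wf_share -/(wf_word _) (perm_wf_word perm_jk) wf_word_tags //.
  exact/wf_word_doubles/uniq_labels.
exact/wf_word_palindrome/uniq_labels.
Qed.

Lemma big_repS (A : {poly {poly C}}) (F : C * share -> C) :
  \sum_(a <- repS A) F a = \sum_(k < size A) \sum_(j < size A`_k) F (A`_k`_j, mono_share j k).
Proof.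
have iotaE m : iota 0 m = index_iota 0 m by rewrite /index_iota subn0.
rewrite /repS big_flatten /= big_map iotaE big_mkord; apply: eq_bigr => k _.
rewrite big_flatten /= big_map iotaE big_mkord; apply: eq_bigr => j _.
by rewrite powS_arch powS_bridge /crossC /= big_seq1 /= !mulr1.
Qed.

Definition pair_coef (F G : Comb C) : tens := fun w =>
  \sum_(a <- F) \sum_(b <- G) a.1 * b.1 * wsl2 (joinw a.2 b.2) w.

Lemma fa_coef_pair_w F G : fa_coef (pair_w F G) =1 pair_coef F G.
Proof.
move=> w; rewrite /pair_w /pair_coef fa_coefE big_flatten /= big_allpairs_dep.
apply: eq_bigr => a _; apply: eq_bigr => b _.
by rewrite -fa_coefE fa_coef_scale fa_coef_wt_word.
Qed.

Definition swap_tag (n : nat) : nat := if odd n then n.-1 else n.+1.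

Lemma swap_tag_inj : injective swap_tag.
Proof. by move=> a b; rewrite /swap_tag; do 2 case: ifP => ?; lia. Qed.

Lemma map_swap_tagL s : map swap_tag (map tagL s) = map tagR s.
Proof.
by rewrite -map_comp; apply: eq_map => x /=; rewrite /swap_tag /tagL /tagR odd_double.
Qed.

Lemma map_swap_tagR s : map swap_tag (map tagR s) = map tagL s.
Proof.
by rewrite -map_comp; apply: eq_map => x /=; rewrite /swap_tag /tagL /tagR /= odd_double.
Qed.

Lemma wsl2_join_swap P Q : wf_share P -> wf_share Q ->
  equivU (wsl2 (joinw P Q)) (wsl2 (joinw Q (P.2, P.1))).
Proof.
move=> wfP wfQ; have := wf_share_join wfP wfQ; rewrite {1}/joinw => wf_PQ.
apply: equivU_trans (wsl2_rot wf_PQ) _; apply: eq_equivU => w.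
rewrite -(wsl2_map (in2W swap_tag_inj)) /joinw !map_cat !map_swap_tagL !map_swap_tagR.
by rewrite -!catA.
Qed.

Definition add_bridge (H : share) : share :=
  (0%N :: map tagR H.1, map tagR H.2 ++ [:: 0%N]).

(* Rotating the first endpoint of the arch of U Q to the end of the join turns
   that arch into a bridge of the partner share. *)
Lemma wsl2_join_Ushare Q H : wf_share Q -> wf_share H ->
  equivU (wsl2 (joinw (Ushare Q) H)) (wsl2 (joinw Q (add_bridge H))).
Proof.
move=> wfQ wfH; have := wf_share_join (wf_Ushare wfQ) wfH.
have -> : joinw (Ushare Q) H = 0%N :: (map tagL (map tagR Q.1 ++ [:: 0%N]) ++
            map tagR H.1 ++ map tagL (map tagR Q.2) ++ map tagR H.2).
  by rewrite /joinw /Ushare /= /tagL double0.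
move=> wf_UQH; apply: equivU_trans (wsl2_rot1 wf_UQH) _; apply: eq_equivU => w.
pose relabel n := (if n %% 2 == 0 then n.*2.+2 else if n == 1 then 0 else n./2)%N.
have labels_QH x : x \in joinw Q (add_bridge H) -> (x %% 2 = 0 \/ x = 1 \/ x %% 4 = 3)%N.
  have : all (fun x => (x %% 2 == 0) || (x == 1) || (x %% 4 == 3))%N (joinw Q (add_bridge H)).
    rewrite /joinw /add_bridge /= !all_cat !all_map /= !all_cat !all_map /= ?all_cat ?all_map /=.
    by repeat (apply/andP; split); try (apply/allP => y _ /=; rewrite /tagL /tagR; lia).
  by move/allP => all_QH /all_QH; lia.
have inj_relabel : {in joinw Q (add_bridge H) &, injective relabel}.
  by move=> x y /labels_QH x3 /labels_QH y3; rewrite /relabel; do ! case: eqP => ?; lia.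
rewrite -(wsl2_map inj_relabel); congr (wsl2 _ w).
have relabelL s : map relabel (map tagL s) = map tagL (map tagR s).
  rewrite -!map_comp; apply: eq_map => y /=; rewrite /relabel /tagL /tagR.
  by case: eqP => ?; lia.
have relabelRR s : map relabel (map tagR (map tagR s)) = map tagR s.
  rewrite -!map_comp; apply: eq_map => y /=; rewrite /relabel /tagL /tagR.
  by do ! case: eqP => ?; lia.
rewrite /joinw /add_bridge /= !map_cat /= !map_cat !relabelL !relabelRR /=.
have -> : relabel (tagR 0) = 0%N by [].
by rewrite -!cats1 -!catA /= /tagL double0.
Qed.

Lemma joinw_odd P H x : x \in joinw P H -> odd x -> x./2 \in H.1 ++ H.2.
Proof.
have tagRK y : (tagR y)./2 = y by rewrite /tagR; lia.
rewrite /joinw !mem_cat => /or4P[] /mapP[y Hy ->]; rewrite ?tagRK ?Hy ?orbT //;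
  by rewrite /tagL odd_double.
Qed.

Lemma wsl2_join_map P H (g : nat -> nat) : {in H.1 ++ H.2 &, injective g} ->
  wsl2 (joinw P (map g H.1, map g H.2)) =1 wsl2 (joinw P H).
Proof.
move=> injg; pose g' n := if odd n then tagR (g n./2) else n.
have g'L s : map g' (map tagL s) = map tagL s.
  by rewrite -map_comp; apply: eq_map => y /=; rewrite /g' /tagL odd_double.
have g'R s : map g' (map tagR s) = map tagR (map g s).
  rewrite -!map_comp; apply: eq_map => y /=; rewrite /g' /tagR /= odd_double /=.
  by congr (_.*2.+1); congr g; lia.
have -> : joinw P (map g H.1, map g H.2) = map g' (joinw P H).
  by rewrite /joinw /= !map_cat !g'L !g'R.
apply: wsl2_map => x y Hx Hy; rewrite /g'.
case: ifP => ox; case: ifP => oy //.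
- by move/tagR_inj/injg => /(_ (joinw_odd Hx ox) (joinw_odd Hy oy)); lia.
- by rewrite /tagR => E; move: oy; rewrite -E /= odd_double.
- by rewrite /tagR => E; move: ox; rewrite E /= odd_double.
Qed.

Lemma wsl2_join_add_bridge P H z : z \notin H.1 ++ H.2 ->
  wsl2 (joinw P (z :: H.1, H.2 ++ [:: z])) =1 wsl2 (joinw P (add_bridge H)).
Proof.
move=> zH w; pose g n := if n == z then 0%N else tagR n.
have inj_g : injective g by move=> a b; rewrite /g /tagR; do 2 case: eqP => ?; lia.
have -> : add_bridge H = (map g (z :: H.1), map g (H.2 ++ [:: z])).
  rewrite /add_bridge /= /g eqxx map_cat /= eqxx; congr (_ :: _, _ ++ _).
    apply/eq_in_map => y Hy /=; case: eqP => // yz; case/negP: zH.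
    by rewrite mem_cat -yz Hy.
  apply/eq_in_map => y Hy /=; case: eqP => // yz; case/negP: zH.
  by rewrite mem_cat -yz Hy orbT.
by rewrite (@wsl2_join_map P (z :: H.1, H.2 ++ [:: z]) g (in2W inj_g)).
Qed.

Lemma wsl2_join_mono_share j k H :
  wsl2 (joinw (mono_share j k) H) =1 cmuln j (wsl2 (joinw (mono_share 0 k) H)).
Proof.
have -> : joinw (mono_share j k) H =
          doubles (map tagL (map tagL (labels j))) ++ joinw (mono_share 0 k) H.
  by rewrite /joinw /mono_share /cross /= map_cat -catA !map_doubles.
move=> w; rewrite wsl2_doubles ?size_map ?size_labels //.
  by rewrite !map_inj_uniq ?uniq_labels //; exact: tagL_inj.
apply/allP => _ /mapP[_ /mapP[y _ ->] ->]; rewrite /joinw !mem_cat /=.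
apply/negP; case/or4P.
- by move/mapP => [_ /mapP[z _ ->]]; rewrite /tagL /tagR; lia.
- by move/mapP => [z _]; rewrite /tagL /tagR; lia.
- by rewrite cats0 => /mapP[_ /mapP[z _ ->]]; rewrite /tagL /tagR; lia.
- by move/mapP => [z _]; rewrite /tagL /tagR; lia.
Qed.

(* The coefficient function of <E, H>, with the arches of E acting as
   multiplication by powers of c. *)
Definition pairing (E : {poly {poly C}}) (H : share) : tens :=
  fun w => \sum_(k < size E) pcmul E`_k (wsl2 (joinw (mono_share 0 k) H)) w.

Implicit Types (E : {poly {poly C}}) (H : share).

Lemma pairingE E H w :
  \sum_(k < size E) \sum_(j < size E`_k) E`_k`_j * wsl2 (joinw (mono_share j k) H) w =
  pairing E H w.
Proof.
rewrite /pairing; apply: eq_bigr => k _; rewrite /pcmul.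
by apply: eq_bigr => j _; rewrite wsl2_join_mono_share.
Qed.

Lemma pair_coef_repS E H : pair_coef (repS E) [:: (1, H)] =1 pairing E H.
Proof.
move=> w; rewrite /pair_coef big_repS -pairingE; apply: eq_bigr => k _.
by apply: eq_bigr => j _; rewrite big_seq1 /= mulr1.
Qed.

Lemma pairing_add_fresh_bridge E H z : z \notin H.1 ++ H.2 ->
  pairing E (z :: H.1, H.2 ++ [:: z]) =1 pairing E (add_bridge H).
Proof.
move=> zH w; apply: eq_bigr => k _; apply: eq_pcmul => w'.
exact: wsl2_join_add_bridge.
Qed.

Lemma u_ev_neq0 n : u_ev C n != 0.
Proof. by rewrite /u_ev monic_neq0 // monicXsubC. Qed.

Lemma pairing_add_bridge n E H : is_e n E -> wf_share H ->
  equivU (pairing E (add_bridge H)) (pcmul (u_ev C n) (pairing E H)).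
Proof.
case=> _ _ eigE wfH; have /eqU_equivU eigEH := eigE H wfH.
have U_pairing : equivU (pair_coef (Uop (repS E)) [:: (1, H)]) (pairing E (add_bridge H)).
  apply: (@eq_equivUl _ (fun w => \sum_(k < size E) \sum_(j < size E`_k)
                E`_k`_j * wsl2 (joinw (Ushare (mono_share j k)) H) w)).
    move=> w; rewrite /pair_coef /Uop big_map big_repS; apply: eq_bigr => k _.
    by apply: eq_bigr => j _; rewrite big_seq1 /= mulr1.
  apply: eq_equivUr (fun w => esym (pairingE E _ w)) _.
  apply: equivU_sum => k; apply: equivU_sum => j; apply: equivUZ.
  exact: wsl2_join_Ushare (wf_mono_share j k) wfH.
have uE_pairing : pair_coef (repS ((u_ev C n)%:P * E)) [:: (1, H)] =1
                  pcmul (u_ev C n) (pairing E H).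
  move=> w; rewrite pair_coef_repS /pairing size_Cmul ?u_ev_neq0 // pcmul_sumr.
  by apply: eq_bigr => k _; rewrite coefCM pcmulM.
apply: equivU_trans (equivU_sym U_pairing) _.
apply: eq_equivUl (fun w => esym (fa_coef_pair_w _ _ w)) _.
by apply: eq_equivUr eigEH => w; rewrite fa_coef_pair_w uE_pairing.
Qed.

Lemma pairing_bridges n E Y D : is_e n E -> uniq Y -> wf_word D ->
  all (fun y => y \notin D) Y ->
  equivU (pairing E (rev Y, D ++ Y)) (pcmul (u_ev C n ^+ size Y) (pairing E ([::], D))).
Proof.
move=> eE; elim/last_ind: Y => [|Y z IH] uY wfD YD.
  by apply: eq_equivU => w; rewrite cats0 expr0 pcmulC mul1r.
move: uY YD; rewrite rcons_uniq all_rcons => /andP[zY uY] /andP[zD YD].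
have zH : z \notin (rev Y, D ++ Y).1 ++ (rev Y, D ++ Y).2.
  by rewrite /= !mem_cat mem_rev negb_or zY negb_or zD zY.
apply: (@eq_equivUl _ (pairing E (z :: rev Y, (D ++ Y) ++ [:: z]))).
  by move=> w; rewrite rev_rcons -cats1 catA.
apply: eq_equivUl (pairing_add_fresh_bridge E zH) _.
have wfH : wf_share (rev Y, D ++ Y) by exact: wf_word_sandwich.
apply: equivU_trans (pairing_add_bridge eE wfH) _.
apply: equivU_trans (equivU_pcmul _ (IH uY wfD YD)) _.
by apply: eq_equivU => w; rewrite size_rcons exprS pcmulM.
Qed.

Lemma pairing_arches E X : uniq X ->
  equivU (pairing E ([::], doubles X)) (cmuln (size X) (pairing E ([::], [::]))).
Proof.
move=> uX; apply: (@eq_equivUr _ _ (fun w => \sum_(k < size E)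
      pcmul E`_k (cmuln (size X) (wsl2 (joinw (mono_share 0 k) ([::], [::])))) w)).
  by move=> w; rewrite /pairing cmuln_sum; apply: eq_bigr => k _; rewrite pcmul_cmuln.
apply: equivU_sum => k; apply: equivU_pcmul.
set S := map tagL ((mono_share 0 k).1 ++ (mono_share 0 k).2).
have joinE D : joinw (mono_share 0 k) ([::], D) = S ++ map tagR D.
  by rewrite /joinw /S map_cat -!catA.
have wf_SX : wf_word (S ++ map tagR (doubles X)).
  exact: wf_word_tags (wf_mono_share 0 k) (wf_word_doubles uX).
rewrite !joinE /= cats0; apply: equivU_trans (wsl2_rot wf_SX) _; apply: eq_equivU => w.
rewrite map_doubles wsl2_doubles ?size_map //; first by rewrite (map_inj_uniq tagR_inj).
by apply/allP => _ /mapP[y _ ->]; apply/mapP => -[z _]; rewrite /tagL /tagR; lia.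
Qed.

Lemma pairing_empty E : equivU (pairing E ([::], [::])) (pcmul E.['X] (monom [::])).
Proof.
apply: (@eq_equivUr _ _ (fun w => \sum_(k < size E) pcmul E`_k (cmuln k (monom [::])) w)).
  move=> w; rewrite horner_coef pcmul_suml; apply: eq_bigr => k _.
  by rewrite pcmulM; apply: eq_pcmul => w'; rewrite pcmulXn.
apply: equivU_sum => k; apply: equivU_pcmul.
set Z := map tagL (map tagR (labels k)).
have -> : joinw (mono_share 0 k) ([::], [::]) = Z ++ rev Z.
  by rewrite /joinw /Z /= !cats0 !map_rev.
have -> : (k : nat) = size Z by rewrite /Z !size_map size_labels.
by apply: wsl2_nested; rewrite /Z (map_inj_uniq tagL_inj) (map_inj_uniq tagR_inj) uniq_labels.
Qed.

Lemma equivU_pair_repS A E :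
  equivU (pair_coef (repS A) (repS E))
         (fun w => \sum_(k < size A) \sum_(j < size A`_k)
                     A`_k`_j * pairing E ((mono_share j k).2, (mono_share j k).1) w).
Proof.
apply: (@eq_equivUl _ (fun w => \sum_(k < size A) \sum_(j < size A`_k) A`_k`_j *
     \sum_(k' < size E) \sum_(j' < size E`_k') E`_k'`_j' *
       wsl2 (joinw (mono_share j k) (mono_share j' k')) w)).
  move=> w; rewrite /pair_coef big_repS; apply: eq_bigr => k _; apply: eq_bigr => j _ /=.
  rewrite big_repS mulr_sumr; apply: eq_bigr => k' _; rewrite mulr_sumr.
  by apply: eq_bigr => j' _ /=; rewrite mulrA.
apply: equivU_sum => k; apply: equivU_sum => j; apply: equivUZ.
apply: eq_equivUr (fun w => esym (pairingE E _ w)) _.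
apply: equivU_sum => k'; apply: equivU_sum => j'; apply: equivUZ.
exact: wsl2_join_swap (wf_mono_share j k) (wf_mono_share j' k').
Qed.

Lemma pairing_swap_mono_share n E j k : is_e n E ->
  equivU (pairing E ((mono_share j k).2, (mono_share j k).1))
         (pcmul (u_ev C n ^+ k) (cmuln j (pcmul E.['X] (monom [::])))).
Proof.
move=> eE; set Y := map tagR (labels k); set X := map tagL (labels j).
have -> : ((mono_share j k).2, (mono_share j k).1) = (rev Y, doubles X ++ Y).
  by rewrite /mono_share /cross /= cats0 /Y /X map_rev map_doubles.
have uY : uniq Y by rewrite /Y (map_inj_uniq tagR_inj) uniq_labels.
have uX : uniq X by rewrite /X (map_inj_uniq tagL_inj) uniq_labels.
have YX : all (fun y => y \notin doubles X) Y.
  apply/allP => _ /mapP[y _ ->]; rewrite mem_doubles; apply/mapP => -[z _].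
  by rewrite /tagL /tagR; lia.
apply: equivU_trans (pairing_bridges eE uY (wf_word_doubles uX) YX) _.
rewrite {1}/Y size_map size_labels; apply: equivU_pcmul.
apply: equivU_trans (pairing_arches E uX) _.
by rewrite /X size_map size_labels; apply/equivU_cmuln/pairing_empty.
Qed.

End SL2Shares.

Unset Implicit Arguments.

Theorem lemma10 (C : numClosedFieldType) (A E : {poly {poly C}}) (n : nat) :
  is_e n E ->
  eqU (pair_w (repS A) (repS E))
      (fa_poly (A.[u_ev C n] * E.['X])).
Proof.
move=> eE; apply/eqU_equivU.
apply: eq_equivUl (fa_coef_pair_w _ _) _; apply: eq_equivUr (fa_coef_poly _) _.
set u := u_ev C n; set G := pcmul E.['X] (monom C [::]).
apply: equivU_trans (equivU_pair_repS A E) _.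
apply: (@equivU_trans _ _ (fun w => \sum_(k < size A) \sum_(j < size A`_k)
                                      A`_k`_j * pcmul (u ^+ k) (cmuln j G) w)).
  by apply: equivU_sum => k; apply: equivU_sum => j; apply/equivUZ/pairing_swap_mono_share.
apply: eq_equivU => w; rewrite pcmulM horner_coef pcmul_suml; apply: eq_bigr => k _.
rewrite mulrC pcmulM pcmul_sumr; apply: eq_bigr => j _.
by rewrite pcmul_scale.
Qed.
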